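(* Let $n\ge4$ and let $D_{\mathbf a}=\sum_{i=1}^{n+1}a_iD_i$ be a framing of $\mathbb P^n$ (fan matrix $V=(\mathbf e_1\cdots\mathbf e_n\ -\mathbf 1)$) with $a_1\le\dots\le a_{n+1}$, $\gcd(a_1,\dots,a_{n+1})=1$, satisfying (a) $\operatorname{conv}(\nabla'\cap N)=\operatorname{conv}\big(\{\mathbf 0\}\cup\{[a_n/a_{n-i+1}]\mathbf e_i:1\le i\le n\}\big)$ where $\nabla'=\operatorname{conv}(\mathbf 0,\mathbf e_1,\tfrac{a_n}{a_{n-1}}\mathbf e_2,\dots,\tfrac{a_n}{a_1}\mathbf e_n)$, and (b) $d_i=d_j=1$ for some $i\ne j$, where $d_k=\gcd\{a_l:l\ne k\}$. Let $(\mathbb X_{\mathbf a},\mathbf b)$ be the $f$-dual, with fan matrix $\Lambda_{\mathbf a}$, $\Delta_{\mathbf b}=\{\mathbf n:\Lambda_{\mathbf a}^T\mathbf n\ge-\mathbf b\}$, $\Delta_{-K}=\{\mathbf n:\Lambda_{\mathbf a}^T\mathbf n\ge-\mathbf 1\}$ and $m_{Y^\vee}:=l(\Delta_{\mathbf b})-1-n-\sum_{\Theta\text{ facet of }\Delta_{-K}}l^*(\Theta)$. Then the following are equivalent: (1) $m_{Y^\vee}=1$; (2) $l(\Delta_{\mathbf b})=l(\nabla)=n+2$, where $\nabla=\operatorname{conv}(V)$; (3) $[\Delta_{\mathbf b}]=\nabla$; (4) $[a_n/a_1]=1$.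
   Context: $[x]$ for a real number is its integer part; for a polytope $P$, $[P]$ is the convex hull of its lattice points, $l(P)$ the number of its lattice points, $l^*(P)$ the number of lattice points in its relative interior. $D_1,\dots,D_{n+1}$ are the torus-invariant prime divisors of $\mathbb P^n$. The $f$-dual: $\Delta_{\mathbf a}=\{\mathbf m:V^T\mathbf m\ge-\mathbf a\}$ (a lattice polytope here), $\mathbb X_{\mathbf a}$ is the toric variety of the fan of cones over the faces of $\Delta_{\mathbf a}$, whose fan matrix $\Lambda_{\mathbf a}=(\boldsymbol\lambda_j)$ consists of the primitive generators of rays through the vertices of $\Delta_{\mathbf a}$, and $b_j=\max(\{1\}\cup\{-\langle\mathbf v_i,\boldsymbol\lambda_j\rangle\}_i)$, $\mathbf v_i$ the columns of $V$. *)

From HB Require Import structures.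
From mathcomp Require Import all_boot all_order all_algebra.
Set Implicit Arguments. Unset Strict Implicit. Unset Printing Implicit Defensive.
Import Order.TTheory GRing.Theory Num.Theory.
Local Open Scope ring_scope.

Definition dotv {R : pzRingType} {n : nat} (u v : 'rV[R]_n) : R :=
  \sum_(k < n) u ord0 k * v ord0 k.

Definition intv {n : nat} (y : 'rV[int]_n) : 'rV[rat]_n := map_mx (fun z : int => z%:~R) y.

(* columns v_1..v_{n+1} of the fan matrix V = (e_1 ... e_n  -1) of P^n;
   0-based: column i < n is e_i, column n is -1 *)
Definition Vcol {n : nat} (i : 'I_n.+1) : 'rV[int]_n :=
  \row_(k < n) (if (i : nat) == n then -1 else if (k : nat) == i then 1 else 0).

Definition ebas {n : nat} (i : 'I_n) : 'rV[rat]_n :=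
  \row_(k < n) (if k == i then 1 else 0).

Definition conv {n : nat} (S : 'rV[rat]_n -> Prop) (x : 'rV[rat]_n) : Prop :=
  exists (m : nat) (p : 'I_m -> 'rV[rat]_n) (w : 'I_m -> rat),
    (forall i, S (p i)) /\ (forall i, 0 <= w i) /\ \sum_i w i = 1 /\
    x = \sum_i w i *: p i.

Definition isLattice {n : nat} (x : 'rV[rat]_n) : Prop := exists y, x = intv y.

Definition card_is {T : eqType} (P : T -> Prop) (k : nat) : Prop :=
  exists s : seq T, uniq s /\ (forall x, x \in s <-> P x) /\ size s = k.

Definition primitive {n : nat} (l : 'rV[int]_n) : Prop :=
  \big[gcdn/0%N]_(k < n) `|l ord0 k|%N = 1%N.

Definition DeltaA {n : nat} (a : 'I_n.+1 -> nat) (x : 'rV[rat]_n) : Prop :=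
  forall i, dotv (intv (Vcol i)) x >= - (a i)%:R.

Definition isVertexA {n : nat} (a : 'I_n.+1 -> nat) (u : 'rV[rat]_n) : Prop :=
  DeltaA a u /\
  forall x y, DeltaA a x -> DeltaA a y -> u = (1/2 : rat) *: (x + y) -> x = y.

(* columns of Lambda_a: primitive generators of rays through vertices of Delta_a *)
Definition isLambda {n : nat} (a : 'I_n.+1 -> nat) (l : 'rV[int]_n) : Prop :=
  primitive l /\
  exists u, isVertexA a u /\ exists t : rat, 0 < t /\ u = t *: intv l.

Definition bval {n : nat} (l : 'rV[int]_n) : int :=
  foldr Num.max 1 [seq - dotv (Vcol i) l | i <- enum 'I_n.+1].

Definition DeltaB {n : nat} (a : 'I_n.+1 -> nat) (y : 'rV[int]_n) : Prop :=
  forall l, isLambda a l -> dotv l y >= - bval l.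

Definition DeltaK {n : nat} (a : 'I_n.+1 -> nat) (y : 'rV[int]_n) : Prop :=
  forall l, isLambda a l -> dotv l y >= -1.

(* lattice points in the relative interior of the facet of Delta_{-K}
   with inner normal l (Delta_{-K} is a simplex whose facets are exactly
   { <l, y> = -1 } for the columns l of Lambda_a) *)
Definition relintFacet {n : nat} (a : 'I_n.+1 -> nat) (l y : 'rV[int]_n) : Prop :=
  dotv l y = -1 /\ forall l', isLambda a l' -> l' != l -> dotv l' y > -1.

Definition mY_is {n : nat} (a : 'I_n.+1 -> nat) (m : int) : Prop :=
  exists (L : nat) (Ls : seq 'rV[int]_n) (S : 'rV[int]_n -> nat),
    uniq Ls /\ (forall l, l \in Ls <-> isLambda a l) /\
    card_is (DeltaB a) L /\
    (forall l, l \in Ls -> card_is (relintFacet a l) (S l)) /\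
    m = L%:Z - 1 - n%:Z - (\sum_(l <- Ls) S l)%N%:Z.

Definition dgcd {n : nat} (a : 'I_n.+1 -> nat) (k : 'I_n.+1) : nat :=
  \big[gcdn/0%N]_(l < n.+1 | l != k) a l.

Definition nablaV {n : nat} (x : 'rV[rat]_n) : Prop :=
  conv (fun z => exists i : 'I_n.+1, z = intv (Vcol i)) x.

(* nabla' = conv(0, e_1, a_n/a_{n-1} e_2, ..., a_n/a_1 e_n); 0-based:
   a_k is a (k-1), e_i is ebas (i-1) *)
Definition nablaP {n : nat} (a : 'I_n.+1 -> nat) (x : 'rV[rat]_n) : Prop :=
  conv (fun z => z = 0 \/ exists i : 'I_n,
          z = ((a (inord n.-1))%:R / (a (inord (n.-1 - i)))%:R) *: ebas i) x.

Definition nablaFloor {n : nat} (a : 'I_n.+1 -> nat) (x : 'rV[rat]_n) : Prop :=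
  conv (fun z => z = 0 \/ exists i : 'I_n,
          z = ((a (inord n.-1) %/ a (inord (n.-1 - i)))%N%:R) *: ebas i) x.

From HB Require Import structures.
From mathcomp Require Import all_boot all_order all_algebra.
From mathcomp Require Import zify ring lra.
Import Order.TTheory GRing.Theory Num.Theory.
Local Open Scope ring_scope.
Set Implicit Arguments. Unset Strict Implicit. Unset Printing Implicit Defensive.

(* The vertices of Delta_a are the points u_j with <v_i, u_j> = -a_i for all i <> j, so the
   columns of Lambda_a are the primitive parts lambda_j of the u_j.  Writing u_j = g_j lambda_j
   gives g_j <v_i, lambda_j> = -a_i + (sum a) [i = j], hence a_i <= g_j b_j <= max_{i <> j} a_i,
   and a lattice point y of Delta_b satisfies <u_j, y> >= - max_{i <> j} a_i for every j.
   If a_n < 2 a_1, these inequalities leave only 0 and the columns of V, i.e. the lattice points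
   of nabla, and all four conditions hold.  If a_n >= 2 a_1, the point 2 e_1 lies in Delta_b
   but not in nabla, so all four conditions fail.  None of these points lies in the relative
   interior of a facet of Delta_{-K}, since each pairs to at most -1 with two distinct lambda_j. *)

Local Notation widen := (widen_ord (leqnSn _)).

Lemma ord_max_or_widen n (i : 'I_n.+1) : i = ord_max \/ exists k : 'I_n, i = widen k.
Proof.
case: (ltnP i n) => [lt_in | le_ni]; first by right; exists (Ordinal lt_in); apply: val_inj.
by left; apply: val_inj => /=; have := ltn_ord i; lia.
Qed.

Lemma widen_eq_max n (k : 'I_n) : (widen k == ord_max) = false.
Proof. by apply/negbTE/eqP => /(congr1 val) /=; have := ltn_ord k; lia. Qed.

Lemma widen_eq n (k k' : 'I_n) : (widen k == widen k') = (k == k').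
Proof. by rewrite -(inj_eq val_inj) /= (inj_eq val_inj). Qed.

Section DotProduct.
Variables (R : comPzRingType) (n : nat).
Implicit Types u x y : 'rV[R]_n.

Lemma dotvDr u x y : dotv u (x + y) = dotv u x + dotv u y.
Proof. by rewrite /dotv -big_split /=; apply: eq_bigr => k _; rewrite mxE mulrDr. Qed.

Lemma dotvZr u x c : dotv u (c *: x) = c * dotv u x.
Proof. by rewrite /dotv mulr_sumr; apply: eq_bigr => k _; rewrite mxE mulrCA. Qed.

Lemma dotvC u x : dotv u x = dotv x u.
Proof. by apply: eq_bigr => k _; rewrite mulrC. Qed.

Lemma dotv0 u : dotv u 0 = 0.
Proof. by rewrite /dotv big1 // => k _; rewrite mxE mulr0. Qed.

End DotProduct.

Lemma intv_dotv n (l y : 'rV[int]_n) : (dotv l y)%:~R = dotv (intv l) (intv y) :> rat.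
Proof. by rewrite /dotv rmorph_sum; apply: eq_bigr => k _; rewrite !mxE rmorphM. Qed.

Lemma intvZ n (l : 'rV[int]_n) (c : int) : intv (c *: l) = c%:~R *: intv l.
Proof. by apply/matrixP => i k; rewrite !mxE intrM. Qed.

Lemma intv0 n : intv (0 : 'rV[int]_n) = 0.
Proof. by apply/matrixP => i k; rewrite !mxE. Qed.

Lemma intv_inj n : injective (@intv n).
Proof.
by move=> x y /matrixP exy; apply/matrixP => i k; have := exy i k; rewrite !mxE => /intr_inj.
Qed.

Section Columns.
Variable n : nat.

Lemma Vcol_widen (k m : 'I_n) : Vcol (widen k) ord0 m = (m == k)%:Z.
Proof.
by rewrite mxE /= ltn_eqF // (inj_eq val_inj); case: (m == k).
Qed.

Lemma Vcol_max (m : 'I_n) : Vcol ord_max ord0 m = -1.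
Proof. by rewrite mxE /= eqxx. Qed.

Hypothesis n_gt0 : (0 < n)%N.

Lemma Vcol_inj : injective (@Vcol n).
Proof.
move=> i j.
have [-> | [k ->]] := ord_max_or_widen i; have [-> | [k' ->]] := ord_max_or_widen j;
  move=> // /matrixP eij.
- by have := eij ord0 k'; rewrite Vcol_max Vcol_widen eqxx.
- by have := eij ord0 k; rewrite Vcol_max Vcol_widen eqxx.
- by have := eij ord0 k; rewrite !Vcol_widen eqxx; case: eqP => // ->.
Qed.

Lemma Vcol_neq0 i : Vcol i != 0 :> 'rV[int]_n.
Proof.
have [-> | [k ->]] := ord_max_or_widen i; apply/eqP => /matrixP Vi0.
  by have := Vi0 ord0 (Ordinal n_gt0); rewrite Vcol_max mxE.
by have := Vi0 ord0 k; rewrite Vcol_widen eqxx mxE.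
Qed.

End Columns.

Definition vdot {n} (i : 'I_n.+1) (x : 'rV[rat]_n) : rat := dotv (intv (Vcol i)) x.

Section Pairing.
Variable n : nat.
Implicit Types (i j : 'I_n.+1) (x y : 'rV[rat]_n).

Lemma vdotD i x y : vdot i (x + y) = vdot i x + vdot i y.
Proof. exact: dotvDr. Qed.

Lemma vdotZ i c x : vdot i (c *: x) = c * vdot i x.
Proof. exact: dotvZr. Qed.

Lemma vdot_widen (k : 'I_n) x : vdot (widen k) x = x ord0 k.
Proof.
rewrite /vdot /dotv (bigD1 k) //= big1 => [|m mk]; last by rewrite mxE Vcol_widen (negbTE mk) mul0r.
by rewrite mxE Vcol_widen eqxx mul1r addr0.
Qed.

Lemma vdot_max x : vdot ord_max x = - \sum_k x ord0 k.
Proof. by rewrite /vdot /dotv -sumrN; apply: eq_bigr => k _; rewrite mxE Vcol_max mulN1r. Qed.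

Lemma sum_vdot x : \sum_i vdot i x = 0.
Proof. by rewrite big_ord_recr /= vdot_max; under eq_bigr do rewrite vdot_widen; rewrite subrr. Qed.

Lemma vdot_inj x y : (forall k : 'I_n, vdot (widen k) x = vdot (widen k) y) -> x = y.
Proof. by move=> exy; apply/matrixP => i k; rewrite (ord1 i) -!vdot_widen. Qed.

(* The pairings with the n + 1 columns of V sum to zero, so any n of them determine x. *)
Lemma vdot_inj_but j x y : (forall i, i != j -> vdot i x = vdot i y) -> x = y.
Proof.
move=> exy; apply: vdot_inj => k; case: (eqVneq (widen k) j) => [-> | /exy //].
have := sum_vdot x; have := sum_vdot y; rewrite (bigD1 j) //= (bigD1 j (P := xpredT)) //=.
by rewrite (eq_bigr _ exy) => ? ?; lra.
Qed.

Definition row_of_vdot (c : 'I_n.+1 -> rat) : 'rV[rat]_n := \row_k c (widen k).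

Lemma vdot_row_of_vdot (c : 'I_n.+1 -> rat) i :
  \sum_i c i = 0 -> vdot i (row_of_vdot c) = c i.
Proof.
move=> c0; have [-> | [k ->]] := ord_max_or_widen i; last by rewrite vdot_widen mxE.
rewrite vdot_max; under eq_bigr do rewrite mxE.
by move: c0; rewrite big_ord_recr /=; lra.
Qed.

End Pairing.

Lemma sumrMn_eq (V : nmodType) m (x : V) (j : 'I_m) : \sum_i x *+ (i == j) = x.
Proof. by rewrite (bigD1 j) //= eqxx big1 ?addr0 // => i /negbTE ->. Qed.

Section VerticesOfDeltaA.
Variables (n : nat) (a : 'I_n.+1 -> nat).
Implicit Types (i j : 'I_n.+1) (u : 'rV[rat]_n).

Definition asum : nat := (\sum_i a i)%N.

Definition vertexA j : 'rV[int]_n :=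
  \row_k (- (a (widen k))%:Z + asum%:Z *+ (widen k == j)).

Lemma vdot_vertexA i j :
  vdot i (intv (vertexA j)) = - (a i)%:R + asum%:R *+ (i == j).
Proof.
pose c i := - (a i)%:R + asum%:R *+ (i == j) : rat.
have -> : intv (vertexA j) = row_of_vdot c.
  by apply/matrixP => ? k; rewrite !mxE rmorphD rmorphN rmorphMn.
apply: vdot_row_of_vdot.
by rewrite big_split /= sumrN sumrMn_eq /asum natr_sum addNr.
Qed.

Lemma dotv_Vcol_vertexA i j :
  dotv (Vcol i) (vertexA j) = - (a i)%:Z + asum%:Z *+ (i == j).
Proof.
apply: (@intr_inj rat); rewrite intv_dotv -/(vdot i _) vdot_vertexA.
by rewrite rmorphD rmorphN rmorphMn.
Qed.

Lemma vertexA_tight j u :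
  (forall i, i != j -> vdot i u = - (a i)%:R) -> u = intv (vertexA j).
Proof.
move=> tight; apply: (vdot_inj_but (j := j)) => i ij.
by rewrite tight // vdot_vertexA (negbTE ij) addr0.
Qed.

Lemma isVertexA_vertexA j : isVertexA a (intv (vertexA j)).
Proof.
split=> [i | x y Dx Dy uxy].
  by rewrite -/(vdot i _) vdot_vertexA; case: (i == j); rewrite ?addr0 ?lerDl.
apply: (vdot_inj_but (j := j)) => i ij; have := Dx i; have := Dy i.
have := vdot_vertexA i j; rewrite uxy vdotZ vdotD (negbTE ij) addr0 -!/(vdot i _).
lra.
Qed.

Definition shift_row i j : 'rV[rat]_n :=
  row_of_vdot (fun m => (m == i)%:R - (m == j)%:R).

Lemma vdot_shift_row m i j :
  i != j -> vdot m (shift_row i j) = (m == i)%:R - (m == j)%:R.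
Proof.
by move=> ij; apply: vdot_row_of_vdot; rewrite sumrB !sumrMn_eq subrr.
Qed.

(* If two inequalities were slack at u, moving u both ways along the direction
   that changes only these two pairings would keep it in Delta_a. *)
Lemma isVertexA_tight u :
  isVertexA a u -> exists j, forall i, i != j -> vdot i u = - (a i)%:R.
Proof.
move=> [Du extreme]; have {}Du m : - (a m)%:R <= vdot m u := Du m.
have [/existsP [j slack_j] | /existsPn tight] := boolP [exists j, vdot j u != - (a j)%:R];
  last by exists ord0 => i _; apply/eqP/negPn.
exists j => i ij; apply/eqP/negPn/negP => slack_i.
have lt_slack m : vdot m u != - (a m)%:R -> 0 < vdot m u + (a m)%:R.
  by move=> ne; have := Du m; rewrite le_eqVlt eq_sym (negbTE ne) /= => ?; lra.
pose e := Num.min (vdot i u + (a i)%:R) (vdot j u + (a j)%:R).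
have e_gt0 : 0 < e by rewrite lt_min !lt_slack.
have [e_le_i e_le_j] : e <= vdot i u + (a i)%:R /\ e <= vdot j u + (a j)%:R.
  by rewrite !ge_min !lexx ?orbT.
have vdot_d m := vdot_shift_row m ij.
have in_DeltaA (s : rat) : s = 1 \/ s = -1 -> DeltaA a (u + (s * e) *: shift_row i j).
  move=> s1 m; rewrite -/(vdot m _) vdotD vdotZ vdot_d; have := Du m.
  by case: eqP => [->|_]; case: eqP => [->|_] /=; case: s1 => ->; lra.
have mid : u = (1 / 2) *:
    ((u + (1 * e) *: shift_row i j) + (u + (-1 * e) *: shift_row i j)).
  by apply/matrixP => ? ?; rewrite !mxE; field.
have := extreme _ _ (in_DeltaA 1 (or_introl erefl)) (in_DeltaA (-1) (or_intror erefl)) mid.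
by move=> /(congr1 (vdot i)); rewrite !vdotD !vdotZ vdot_d eqxx (negbTE ij) /=; lra.
Qed.

Lemma isVertexAP u : isVertexA a u <-> exists j, u = intv (vertexA j).
Proof.
split=> [/isVertexA_tight [j /vertexA_tight ->] | [j ->]]; last exact: isVertexA_vertexA.
by exists j.
Qed.

End VerticesOfDeltaA.

Section PrimitivePart.
Variable n : nat.
Implicit Types u l : 'rV[int]_n.

Definition content u : nat := \big[gcdn/0%N]_(k < n) `|u ord0 k|%N.

Definition primpart u : 'rV[int]_n := \row_k (u ord0 k %/ (content u)%:Z)%Z.

Lemma content_dvd u k : ((content u)%:Z %| u ord0 k)%Z.
Proof. by rewrite dvdzE; apply: (biggcdn_inf k). Qed.

Lemma content_gt0 u : u != 0 -> (0 < content u)%N.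
Proof.
rewrite lt0n; apply: contraNneq => c0; apply/eqP/matrixP => i k.
by have := content_dvd u k; rewrite c0 dvd0z (ord1 i) mxE => /eqP.
Qed.

Lemma primpartK u : u = (content u)%:Z *: primpart u.
Proof. by apply/matrixP => i k; rewrite (ord1 i) !mxE mulrC divzK ?content_dvd. Qed.

Lemma primitive_primpart u : u != 0 -> primitive (primpart u).
Proof.
move=> u_neq0; have c_gt0 := content_gt0 u_neq0.
suff : (\big[gcdn/0%N]_(k < n) `|primpart u ord0 k|%N * content u %| content u)%N.
  by rewrite -{2}(mul1n (content u)) dvdn_pmul2r // dvdn1 => /eqP.
apply/dvdn_biggcdP => k _.
have -> : `|u ord0 k|%N = (`|primpart u ord0 k| * content u)%N.
  by rewrite {1}(primpartK u) mxE abszM mulnC.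
by rewrite dvdn_pmul2r //; apply: (biggcdn_inf k).
Qed.

(* The gcd of the entries of l is an integer combination of them (Bezout). *)
Lemma primitive_scale_int l (r : rat) : primitive l ->
  (forall k, exists z : int, r * (l ord0 k)%:~R = z%:~R) -> exists z : int, r = z%:~R.
Proof.
rewrite /primitive => l_prim r_l.
suff [z rz] : exists z : int, ((\big[gcdn/0%N]_(k < n) `|l ord0 k|)%N%:R : rat) * r = z%:~R.
  by exists z; rewrite -rz l_prim mul1r.
apply: (big_ind (fun x : nat => exists z : int, (x%:R : rat) * r = z%:~R)).
- by exists 0; rewrite mul0r.
- move=> x y [zx xr] [zy yr]; have [p [q pq]] := Bezoutz x y.
  exists (p * zx + q * zy).
  have -> : (gcdn x y)%:R = ((gcdz x y)%:~R : rat) by [].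
  by rewrite -pq !rmorphD !rmorphM /= -!pmulrn -xr -yr; ring.
- move=> k _; have [z rz] := r_l k; exists (z * sgz (l ord0 k)).
  by rewrite pmulrn abszEsg !intrM -rz; ring.
Qed.

Lemma primitive_unique l l' (t : rat) : primitive l -> primitive l' -> 0 < t ->
  intv l = t *: intv l' -> l = l'.
Proof.
move=> l_prim l'_prim t_gt0 ll'.
have l'l : intv l' = t^-1 *: intv l by rewrite ll' scalerA mulVf ?scale1r ?gt_eqF.
have [p tp] : exists p : int, t = p%:~R.
  apply: (primitive_scale_int l'_prim) => k; exists (l ord0 k).
  by have /matrixP/(_ ord0 k) := ll'; rewrite !mxE => ->.
have [q tq] : exists q : int, t^-1 = q%:~R.
  apply: (primitive_scale_int l_prim) => k; exists (l' ord0 k).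
  by have /matrixP/(_ ord0 k) := l'l; rewrite !mxE => ->.
have p_gt0 : 0 < p by rewrite -(ltr0z rat) -tp.
have q_gt0 : 0 < q by rewrite -(ltr0z rat) -tq invr_gt0.
have pq1 : p * q = 1 by apply: (@intr_inj rat); rewrite intrM -tp -tq mulfV ?gt_eqF.
have p1 : p = 1 by nia.
by apply: intv_inj; rewrite ll' tp p1 scale1r.
Qed.

End PrimitivePart.

Lemma content_dvd_dotv n (w u : 'rV[int]_n) : ((content u)%:Z %| dotv w u)%Z.
Proof. by apply: rpred_sum => k _; apply: dvdz_mull; apply: content_dvd. Qed.

Lemma bval_ge1 n (l : 'rV[int]_n) : 1 <= bval l.
Proof. by rewrite /bval; elim: (map _ _) => //= x s ih; rewrite le_max ih orbT. Qed.

Lemma bval_ge n (l : 'rV[int]_n) i : - dotv (Vcol i) l <= bval l.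
Proof.
rewrite /bval; elim: (enum _) (mem_enum 'I_n.+1 i) => //= i' s ih.
by rewrite inE le_max => /orP [/eqP <- | /ih ->]; rewrite ?lexx ?orbT.
Qed.

Lemma bval_cases n (l : 'rV[int]_n) :
  bval l = 1 \/ exists i, bval l = - dotv (Vcol i) l.
Proof.
rewrite /bval; elim: (enum _) => [|i s ih] /=; first by left.
rewrite /Num.max; case: ifP => _; last by right; exists i.
by case: ih => [-> | [i' ->]]; [left | right; exists i'].
Qed.

Lemma exists_neq n (n_gt0 : (0 < n)%N) (j : 'I_n.+1) : exists i, i != j.
Proof.
case: (eqVneq j ord0) => [-> | j0]; last by exists ord0; rewrite eq_sym.
by exists ord_max; apply/eqP => /(congr1 val) /=; lia.
Qed.

Lemma relintFacet_DeltaB n (a : 'I_n.+1 -> nat) l y : relintFacet a l y -> DeltaB a y.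
Proof.
move=> [yl interior] l' l'_Lam; have := bval_ge1 l'.
case: (eqVneq l' l) => [-> | l'l]; first by rewrite yl; lia.
by have := interior _ l'_Lam l'l; lia.
Qed.

Lemma not_relintFacet0 n (a : 'I_n.+1 -> nat) l : ~ relintFacet a l 0.
Proof. by move=> [/eqP]; rewrite dotv0. Qed.

Section LambdaA.
Variables (n : nat) (a : 'I_n.+1 -> nat).
Hypotheses (a_gt0 : forall i, (0 < a i)%N) (n_ge2 : (2 <= n)%N).
Implicit Types (i j : 'I_n.+1) (l y : 'rV[int]_n).

Definition lambdaA j : 'rV[int]_n := primpart (vertexA a j).

Definition contentA j : nat := content (vertexA a j).

Lemma vertexA_neq0 j : vertexA a j != 0.
Proof.
have [k kj] : exists k : 'I_n, widen k != j.
  have [k0 k1] : (0 < n)%N /\ (1 < n)%N by lia.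
  case: (eqVneq (widen (Ordinal k0)) j) => [<- | ?]; last by exists (Ordinal k0).
  by exists (Ordinal k1); rewrite widen_eq.
apply/eqP => /matrixP/(_ ord0 k); rewrite !mxE (negbTE kj) addr0 => /eqP.
by rewrite oppr_eq0 eqz_nat gtn_eqF ?a_gt0.
Qed.

Lemma contentA_gt0 j : (0 < contentA j)%N.
Proof. exact/content_gt0/vertexA_neq0. Qed.

Lemma primitive_lambdaA j : primitive (lambdaA j).
Proof. exact/primitive_primpart/vertexA_neq0. Qed.

Lemma contentA_le i j : i != j -> (contentA j <= a i)%N.
Proof.
move=> ij; apply: dvdn_leq (a_gt0 i) _.
have := content_dvd_dotv (Vcol i) (vertexA a j).
by rewrite dotv_Vcol_vertexA (negbTE ij) addr0 dvdzE abszN absz_nat.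
Qed.

Lemma dotv_Vcol_lambdaA i j :
  (contentA j)%:Z * dotv (Vcol i) (lambdaA j) = - (a i)%:Z + (asum a)%:Z *+ (i == j).
Proof. by rewrite -dotvZr -primpartK dotv_Vcol_vertexA. Qed.

Lemma dotv_Vcol_lambdaA_le i j : i != j -> dotv (Vcol i) (lambdaA j) <= -1.
Proof.
move=> ij; have := dotv_Vcol_lambdaA i j; rewrite (negbTE ij) addr0.
have := contentA_gt0 j; have := a_gt0 i; nia.
Qed.

Lemma asum_gt j : (a j < asum a)%N.
Proof.
have [i ij] := exists_neq (ltnW n_ge2) j.
rewrite /asum (bigD1 j) //= (bigD1 i) //=; have := a_gt0 i; lia.
Qed.

Lemma dotv_Vcol_lambdaA_gt0 j : 0 < dotv (Vcol j) (lambdaA j).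
Proof.
have := dotv_Vcol_lambdaA j j; rewrite eqxx.
have := contentA_gt0 j; have := asum_gt j; nia.
Qed.

Lemma lambdaA_inj : injective lambdaA.
Proof.
move=> j j' eq_jj'; apply/eqP/negPn/negP => jj'.
by have := dotv_Vcol_lambdaA_gt0 j; have := dotv_Vcol_lambdaA_le jj'; rewrite eq_jj'; lia.
Qed.

Lemma isLambdaP l : isLambda a l <-> exists j, l = lambdaA j.
Proof.
have vertexA_lambdaA j : intv (vertexA a j) = ((contentA j)%:Z)%:~R *: intv (lambdaA j).
  by rewrite -intvZ -primpartK.
split=> [[l_prim [_ [/isVertexAP [j ->] [t [t_gt0 ul]]]]] | [j ->]].
  exists j; apply: (primitive_unique (t := ((contentA j)%:Z)%:~R / t)) l_prim _ _ _.
  - exact: primitive_lambdaA.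
  - by rewrite divr_gt0 // ltr0z ltz_nat contentA_gt0.
  have -> : intv l = t^-1 *: intv (vertexA a j) by rewrite ul scalerA mulVf ?scale1r ?gt_eqF.
  by rewrite vertexA_lambdaA scalerA mulrC.
split; first exact: primitive_lambdaA.
exists (intv (vertexA a j)); split; first exact: isVertexA_vertexA.
by exists ((contentA j)%:Z)%:~R; rewrite vertexA_lambdaA ltr0z ltz_nat contentA_gt0.
Qed.

Lemma DeltaBP y : DeltaB a y <-> forall j, - bval (lambdaA j) <= dotv (lambdaA j) y.
Proof.
split=> [By j | By l /isLambdaP [j ->] //].
by apply: By; apply/isLambdaP; exists j.
Qed.

Lemma contentA_bval_ge i j : i != j -> (a i)%:Z <= (contentA j)%:Z * bval (lambdaA j).
Proof.
move=> ij; have := bval_ge (lambdaA j) i; have := dotv_Vcol_lambdaA i j.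
by rewrite (negbTE ij) addr0; have := contentA_gt0 j; nia.
Qed.

Lemma contentA_bval_le j M :
  (forall i, i != j -> (a i <= M)%N) -> (contentA j)%:Z * bval (lambdaA j) <= M%:Z.
Proof.
move=> le_M; have [-> | [i ->]] := bval_cases (lambdaA j).
  have [i ij] := exists_neq (ltnW n_ge2) j.
  by rewrite mulr1 lez_nat (leq_trans (contentA_le ij) (le_M i ij)).
rewrite mulrN dotv_Vcol_lambdaA; case: (eqVneq i j) => [-> | ij].
  by rewrite mulr1n opprD opprK; have := asum_gt j; lia.
by rewrite addr0 opprK lez_nat le_M.
Qed.

Lemma DeltaB_dotv_vertexA y j M :
  DeltaB a y -> (forall i, i != j -> (a i <= M)%N) -> - M%:Z <= dotv (vertexA a j) y.
Proof.
move=> /DeltaBP /(_ j) By /contentA_bval_le le_M.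
rewrite [vertexA a j]primpartK dotvC dotvZr dotvC -/(contentA j) -/(lambdaA j).
have g_ge0 : 0 <= (contentA j)%:Z by [].
by have := ler_wpM2l g_ge0 By; rewrite mulrN; lra.
Qed.

(* For each j != k one of i1, i2 differs from j, and a_i <= g_j b_j for i != j. *)
Lemma DeltaB_scale_Vcol (c : nat) k i1 i2 :
  i1 != i2 -> (c * a k <= a i1)%N -> (c * a k <= a i2)%N -> DeltaB a (c%:Z *: Vcol k).
Proof.
move=> i12 le1 le2; apply/DeltaBP => j; rewrite dotvZr dotvC.
case: (eqVneq k j) => [<- | kj].
  by have := dotv_Vcol_lambdaA_gt0 k; have := bval_ge1 (lambdaA k); have := le0z_nat c; nra.
have [i ij le_i] : exists2 i, i != j & (c * a k <= a i)%N.
  by case: (eqVneq i1 j) => [e1 | ?]; [exists i2; rewrite // -e1 eq_sym | exists i1].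
have := contentA_bval_ge ij; have := dotv_Vcol_lambdaA k j; rewrite (negbTE kj) addr0.
have g_gt0 : 0 < (contentA j)%:Z by rewrite ltz_nat contentA_gt0.
by move: le_i; rewrite -lez_nat PoszM; have := le0z_nat c; nra.
Qed.

Lemma not_relintFacet_on_two l y j1 j2 : j1 != j2 ->
  dotv (lambdaA j1) y <= -1 -> dotv (lambdaA j2) y <= -1 -> ~ relintFacet a l y.
Proof.
move=> j12 y1 y2 [_ interior].
have Lam j : isLambda a (lambdaA j) by apply/isLambdaP; exists j.
case: (eqVneq (lambdaA j1) l) => [e1 | n1]; last by have := interior _ (Lam j1) n1; lia.
have n2 : lambdaA j2 != l by rewrite -e1 (inj_eq lambdaA_inj) eq_sym.
by have := interior _ (Lam j2) n2; lia.
Qed.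

Lemma two_neq i : exists j1 j2, [/\ j1 != j2, j1 != i & j2 != i].
Proof.
have [o0 o1] : (0 < n.+1)%N /\ (1 < n.+1)%N by lia.
pose i0 : 'I_n.+1 := Ordinal o0; pose i1 : 'I_n.+1 := Ordinal o1.
have [n01 n0m n1m] : [/\ i0 != i1, i0 != ord_max & i1 != ord_max].
  by split; apply/eqP => /(congr1 val) /=; lia.
case: (eqVneq i i0) => [-> | ?]; first by exists i1, ord_max; rewrite n1m eq_sym n01 eq_sym.
case: (eqVneq i i1) => [-> | ?]; first by exists i0, ord_max; rewrite n0m n01 eq_sym.
by exists i0, i1; rewrite n01 !(eq_sym _ i).
Qed.

Lemma not_relintFacet_scale_Vcol l (c : int) i : 0 < c -> ~ relintFacet a l (c *: Vcol i).
Proof.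
move=> c_gt0; have c_ge1 : 1 <= c by lia.
have [j1 [j2 [j12 j1i j2i]]] := two_neq i.
apply: (not_relintFacet_on_two j12); rewrite dotvZr dotvC.
  by have := dotv_Vcol_lambdaA_le (i := i) (j := j1); rewrite eq_sym j1i; nra.
by have := dotv_Vcol_lambdaA_le (i := i) (j := j2); rewrite eq_sym j2i; nra.
Qed.

End LambdaA.

Definition nabla_pts n : seq 'rV[int]_n := 0 :: [seq Vcol i | i <- enum 'I_n.+1].

Section NablaPoints.
Variable n : nat.
Implicit Types (y : 'rV[int]_n) (x : 'rV[rat]_n).

Lemma mem_nabla_pts y : y \in nabla_pts n <-> y = 0 \/ exists i, y = Vcol i.
Proof.
rewrite inE; split=> [/orP [/eqP -> | /mapP [i _ ->]] | [-> | [i ->]]]; first by left.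
- by right; exists i.
- by rewrite eqxx.
- by rewrite map_f ?orbT ?mem_enum.
Qed.

Lemma size_nabla_pts : size (nabla_pts n) = n.+2.
Proof. by rewrite /= size_map size_enum_ord. Qed.

Lemma uniq_nabla_pts : (0 < n)%N -> uniq (nabla_pts n).
Proof.
move=> n_gt0; rewrite /= map_inj_uniq ?enum_uniq ?andbT; last exact: Vcol_inj.
by apply/mapP => [[i _ /esym/eqP]]; apply/negP/Vcol_neq0.
Qed.

Lemma card_is_nabla_pts (P : 'rV[int]_n -> Prop) :
  (0 < n)%N -> (forall y, P y <-> y \in nabla_pts n) -> card_is P n.+2.
Proof.
move=> n_gt0 P_pts; exists (nabla_pts n); rewrite uniq_nabla_pts ?size_nabla_pts //.
by split=> //; split=> // y; rewrite P_pts.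
Qed.

Section Classification.
Variable a : 'I_n.+1 -> nat.
Hypothesis a_gt0 : forall i, (0 < a i)%N.

Let wsum y : int := \sum_k (a (widen k))%:Z * y ord0 k.

Lemma dotv_vertexA_widen k y :
  dotv (vertexA a (widen k)) y = (asum a)%:Z * y ord0 k - wsum y.
Proof.
rewrite /dotv /wsum (bigD1 k) //= [X in _ = _ - X](bigD1 k) //= mxE eqxx mulr1n.
rewrite (eq_bigr (fun m => - ((a (widen m))%:Z * y ord0 m))) => [|m /negbTE mk].
  by rewrite sumrN; ring.
by rewrite mxE widen_eq mk addr0 mulNr.
Qed.

Lemma dotv_vertexA_max y : dotv (vertexA a ord_max) y = - wsum y.
Proof.
by rewrite /dotv /wsum -sumrN; apply: eq_bigr => m _; rewrite mxE widen_eq_max addr0 mulNr.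
Qed.

Lemma nonneg_pts T y : (forall k, 0 <= y ord0 k) -> (forall k, (T < 2 * a (widen k))%N) ->
  - T%:Z <= dotv (vertexA a ord_max) y -> y = 0 \/ exists k, y = Vcol (widen k).
Proof.
move=> y_ge0 T_lt; rewrite dotv_vertexA_max lerN2 => sum_le.
have term_ge0 k : 0 <= (a (widen k))%:Z * y ord0 k by rewrite mulr_ge0.
have sum_ge k : (a (widen k))%:Z * y ord0 k <= wsum y.
  by rewrite /wsum (bigD1 k) //= lerDl sumr_ge0.
case: (boolP [exists k, y ord0 k != 0]) => [/existsP [k yk] | /existsPn y0]; last first.
  by left; apply/matrixP => i k; rewrite (ord1 i) mxE; apply/eqP/negPn.
(* [zmodp.ord1] would rewrite [i] to the ring zero of 'I_1, which [nia] does not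
   identify with the [ord0] of the other entries. *)
right; exists k; apply/matrixP => i m; rewrite (fintype.ord1 i) Vcol_widen.
have := T_lt k; have := a_gt0 (widen k); have := sum_ge k; have := y_ge0 k.
case: (eqVneq m k) => [-> | mk] /=; first by move: yk sum_le; nia.
have pair_le : (a (widen k))%:Z * y ord0 k + (a (widen m))%:Z * y ord0 m <= wsum y.
  by rewrite /wsum (bigD1 k) //= (bigD1 m) //= addrA lerDl sumr_ge0.
by have := T_lt m; have := y_ge0 m; have := a_gt0 (widen m); move: yk sum_le pair_le; nia.
Qed.

(* Weighting the inequalities by a gives sum_k a_k y_k >= - sum_k a_k, which forces y >= -1. *)
Lemma neg_pts y k0 : y ord0 k0 < 0 ->
  (forall k, - (a ord_max)%:Z <= dotv (vertexA a (widen k)) y) -> y = Vcol ord_max.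
Proof.
move=> yk0_lt0 ineq.
set C := \sum_k (a (widen k))%:Z; set K := (a ord_max)%:Z.
have asumE : (asum a)%:Z = C + K.
  by rewrite /asum big_ord_recr /= PoszD /C (big_morph Posz PoszD (erefl 0%:Z)).
have {}ineq k : - K <= (C + K) * y ord0 k - wsum y by rewrite -asumE -dotv_vertexA_widen.
have K_gt0 : 0 < K by rewrite ltz_nat.
have C_ge0 : 0 <= C by rewrite sumr_ge0.
have wsum_ge : - C <= wsum y.
  have : 0 <= \sum_k (a (widen k))%:Z * ((C + K) * y ord0 k - wsum y + K).
    by apply: sumr_ge0 => k _; apply: mulr_ge0 => //; have := ineq k; lra.
  have -> : \sum_k (a (widen k))%:Z * ((C + K) * y ord0 k - wsum y + K) = K * (wsum y + C).
    rewrite (eq_bigr (fun k =>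
      (C + K) * ((a (widen k))%:Z * y ord0 k) + (K - wsum y) * (a (widen k))%:Z)) => [|k _].
      by rewrite big_split /= -!mulr_sumr; ring.
    by ring.
  by nra.
have y_ge k : -1 <= y ord0 k by have := ineq k; nia.
have wsumE : wsum y + C = 0 by have := ineq k0; have := y_ge k0; move: yk0_lt0; nia.
have y_eq k : y ord0 k = -1.
  have : (a (widen k))%:Z * (y ord0 k + 1) = 0.
    apply: (psumr_eq0P (P := xpredT) (F := fun k => (a (widen k))%:Z * (y ord0 k + 1))) => //.
      by move=> m _; apply: mulr_ge0 => //; have := y_ge m; lia.
    by rewrite -[RHS]wsumE /wsum /C -big_split /=; apply: eq_bigr => m _; ring.
  by have := a_gt0 (widen k); have := y_ge k; nia.
by apply/matrixP => i m; rewrite (fintype.ord1 i) Vcol_max y_eq.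
Qed.

Lemma bounded_pts T y : (forall k, (T < 2 * a (widen k))%N) ->
  - T%:Z <= dotv (vertexA a ord_max) y ->
  (forall k, - (a ord_max)%:Z <= dotv (vertexA a (widen k)) y) -> y \in nabla_pts n.
Proof.
move=> T_lt le_max le_widen; apply/mem_nabla_pts.
have [/forallP y_ge0 | /forallPn [k0]] := boolP [forall k, 0 <= y ord0 k].
  by case: (nonneg_pts y_ge0 T_lt le_max) => [-> | [k ->]]; [left | right; exists (widen k)].
by rewrite -ltNge => /neg_pts /(_ le_widen) ->; right; exists ord_max.
Qed.

End Classification.
End NablaPoints.

Lemma conv_dotv_ge n (S : 'rV[rat]_n -> Prop) w b x :
  (forall z, S z -> b <= dotv w z) -> conv S x -> b <= dotv w x.
Proof.
move=> S_ge [m [p [c [Sp [c_ge0 [c1 ->]]]]]].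
rewrite (big_morph _ (dotvDr w) (dotv0 w)) -[b]mul1r -c1 mulr_suml.
by apply: ler_sum => i _; rewrite dotvZr ler_wpM2l ?S_ge.
Qed.

Lemma conv1 n (S : 'rV[rat]_n -> Prop) x : S x -> conv S x.
Proof.
move=> Sx; exists 1%N, (fun _ => x), (fun _ => 1).
by split=> //; rewrite !big_ord1 scale1r.
Qed.

Lemma intv_Vcol_widen n (k m : 'I_n) : intv (Vcol (widen k)) ord0 m = (m == k)%:R.
Proof. by rewrite mxE Vcol_widen. Qed.

Lemma intv_Vcol_max n (m : 'I_n) : intv (Vcol ord_max) ord0 m = -1.
Proof. by rewrite mxE Vcol_max. Qed.

Section VertexPairings.
Variables (n : nat) (a : 'I_n.+1 -> nat).
Implicit Types x : 'rV[rat]_n.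

Lemma dotv_intv_vertexA_widen k x : dotv (intv (vertexA a (widen k))) x =
  (asum a)%:R * x ord0 k - \sum_m (a (widen m))%:R * x ord0 m.
Proof.
rewrite /dotv (bigD1 k) //= [X in _ = _ - X](bigD1 k) //= !mxE eqxx mulr1n.
rewrite (eq_bigr (fun m => - ((a (widen m))%:R * x ord0 m))) => [|m /negbTE mk].
  by rewrite sumrN rmorphD rmorphN /=; ring.
by rewrite !mxE widen_eq mk addr0 rmorphN mulNr.
Qed.

Lemma dotv_intv_vertexA_max x :
  dotv (intv (vertexA a ord_max)) x = - \sum_m (a (widen m))%:R * x ord0 m.
Proof.
rewrite /dotv -sumrN; apply: eq_bigr => m _.
by rewrite !mxE widen_eq_max addr0 rmorphN mulNr.
Qed.

End VertexPairings.

Section Nabla.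
Variable n : nat.
Implicit Types (x : 'rV[rat]_n) (y : 'rV[int]_n).

Local Notation one := (fun _ : 'I_n.+1 => 1%N).
Local Notation u1 j := (intv (vertexA one j)).

Lemma asum_one : asum one = n.+1.
Proof. by rewrite /asum sum1_card card_ord. Qed.

Lemma dotv_u1_Vcol i j : dotv (u1 j) (intv (Vcol i)) = -1 + (n.+1)%:R *+ (i == j).
Proof. by rewrite dotvC -/(vdot i _) vdot_vertexA asum_one. Qed.

Lemma dotv_u1_widen k x : dotv (u1 (widen k)) x = (n.+1)%:R * x ord0 k - \sum_m x ord0 m.
Proof. by rewrite dotv_intv_vertexA_widen asum_one; under eq_bigr do rewrite mul1r. Qed.

Lemma dotv_u1_max x : dotv (u1 ord_max) x = - \sum_m x ord0 m.
Proof. by rewrite dotv_intv_vertexA_max; under eq_bigr do rewrite mul1r. Qed.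

(* nabla = conv V is the polar of Delta_1, i.e. it is cut out by the vertices of Delta_1;
   the barycentric coordinates of x are the (1 + <u_j, x>) / (n + 1). *)
Lemma nablaVP x : nablaV x <-> forall j, -1 <= dotv (u1 j) x.
Proof.
split=> [x_nabla j | x_ge].
  by apply: (conv_dotv_ge _ x_nabla) => _ [i ->]; rewrite dotv_u1_Vcol lerDl mulrn_wge0.
pose w i := (1 + dotv (u1 i) x) / (n.+1)%:R.
have w_widen k : w (widen k) = x ord0 k + w ord_max.
  by rewrite /w dotv_u1_widen dotv_u1_max; field; rewrite nat1r pnatr_eq0.
exists n.+1, (fun i => intv (Vcol i)), w; split; first by move=> i; exists i.
split; first by move=> i; have := x_ge i; rewrite /w => ?; apply: divr_ge0 => //; lra.
split.
  rewrite big_ord_recr /= (eq_bigr _ (fun k _ => w_widen k)) big_split /= sumr_const card_ord.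
  by rewrite /w dotv_u1_max -mulr_natr -natr1; field; rewrite natr1 pnatr_eq0.
apply/matrixP => i k; rewrite (fintype.ord1 i) summxE big_ord_recr /= mxE.
rewrite intv_Vcol_max (bigD1 k) //= mxE intv_Vcol_widen eqxx big1 => [|m mk].
  by rewrite w_widen /=; ring.
by rewrite mxE intv_Vcol_widen eq_sym (negbTE mk) mulr0.
Qed.

Lemma nablaV_intv y : nablaV (intv y) <-> y \in nabla_pts n.
Proof.
split=> [/nablaVP y_ge | /mem_nabla_pts [-> | [i ->]]]; last by apply: conv1; exists i.
  have {}y_ge j : -1 <= dotv (vertexA one j) y by rewrite -(ler_int rat) intv_dotv y_ge.
  by apply: (@bounded_pts n one _ 1%N) => // k; rewrite -asum_one.
by apply/nablaVP => j; rewrite intv0 dotv0 lerN10.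
Qed.

Lemma scale2_Vcol_notin_nabla_pts i : i != ord_max -> 2%:Z *: Vcol i \notin nabla_pts n.
Proof.
have [-> | [k ->] _] := ord_max_or_widen i; first by rewrite eqxx.
apply/negP => /mem_nabla_pts [| [j]] /matrixP /(_ ord0 k); rewrite mxE Vcol_widen eqxx.
  by rewrite mxE.
have [-> | [k' ->]] := ord_max_or_widen j; first by rewrite Vcol_max.
by rewrite Vcol_widen; case: (k == k').
Qed.

Lemma conv_lattice_nabla_pts (P : 'rV[int]_n -> Prop) :
  (forall y, P y <-> y \in nabla_pts n) ->
  forall x, conv (fun z => exists y, z = intv y /\ P y) x <-> nablaV x.
Proof.
move=> P_pts x; split=> [x_conv | [m [p [c [p_V rest]]]]].
  apply/nablaVP => j; apply: (conv_dotv_ge _ x_conv) => _ [y [-> /P_pts /nablaV_intv]].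
  by move/nablaVP.
exists m, p, c; split=> // i; have [j ->] := p_V i.
by exists (Vcol j); split=> //; apply/P_pts/mem_nabla_pts; right; exists j.
Qed.

Lemma card_nabla_lattice : (0 < n)%N -> card_is (fun y : 'rV[int]_n => nablaV (intv y)) n.+2.
Proof. by move=> n_gt0; apply: card_is_nabla_pts => // y; rewrite nablaV_intv. Qed.

End Nabla.

Section Counting.
Variable T : eqType.

Lemma card_is_size_le (P : T -> Prop) L (t : seq T) :
  card_is P L -> uniq t -> (forall y, y \in t -> P y) -> (size t <= L)%N.
Proof.
move=> [s [_ [s_P <-]]] t_uniq t_P.
by apply: uniq_leq_size t_uniq _ => y /t_P /s_P.
Qed.

Lemma card_is_disjoint_union (I : eqType) (ls : seq I) (P : I -> T -> Prop) (S : I -> nat) :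
  uniq ls -> (forall l, l \in ls -> card_is (P l) (S l)) ->
  (forall l1 l2 y, l1 \in ls -> l2 \in ls -> P l1 y -> P l2 y -> l1 = l2) ->
  card_is (fun y => exists2 l, l \in ls & P l y) (\sum_(l <- ls) S l)%N.
Proof.
elim: ls => [|l ls IH] /= => [_ _ _ | /andP [l_ls ls_uniq] card_P disj].
  by exists [::]; rewrite big_nil; split=> //; split=> // y; split=> // [[]].
have sub l' : l' \in ls -> l' \in l :: ls by rewrite inE => ->; rewrite orbT.
have [s2 [s2_uniq [s2_P s2_size]]] := IH ls_uniq (fun l' h => card_P l' (sub _ h))
  (fun l1 l2 y h1 h2 => disj l1 l2 y (sub _ h1) (sub _ h2)).
have [s1 [s1_uniq [s1_P s1_size]]] := card_P l (mem_head _ _).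
exists (s1 ++ s2); split; last split; last by rewrite size_cat s1_size s2_size big_cons.
  rewrite cat_uniq s1_uniq s2_uniq andbT /=; apply/hasPn => y /s2_P [l' l'_ls Py].
  apply/negP => /s1_P Py'; move: l_ls.
  by rewrite (disj l l' y (mem_head _ _) (sub _ l'_ls) Py' Py) l'_ls.
move=> y; rewrite mem_cat; split=> [/orP [/s1_P | /s2_P [l' l'_ls]] | [l']].
- by exists l; rewrite ?mem_head.
- by exists l'; rewrite ?sub.
rewrite inE => /orP [/eqP -> /s1_P -> // | l'_ls Py].
by apply/orP; right; apply/s2_P; exists l'.
Qed.

End Counting.

Lemma relintFacet_disjoint n (a : 'I_n.+1 -> nat) (ls : seq 'rV[int]_n) :
  (forall l, l \in ls <-> isLambda a l) -> forall l1 l2 y,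
  l1 \in ls -> l2 \in ls -> relintFacet a l1 y -> relintFacet a l2 y -> l1 = l2.
Proof.
move=> ls_Lam l1 l2 y _ /ls_Lam l2_Lam [y_l1 interior] [y_l2 _].
by apply/eqP/negPn/negP => /eqP/nesym/eqP/(interior _ l2_Lam); rewrite y_l2 ltxx.
Qed.

(* m_{Y^vee} + n + 1 counts the lattice points of Delta_b that lie in the relative
   interior of no facet of Delta_{-K}. *)
Lemma mY_is_ge n (a : 'I_n.+1 -> nat) m (t : seq 'rV[int]_n) :
  mY_is a m -> uniq t -> (forall y, y \in t -> DeltaB a y) ->
  (forall l y, y \in t -> ~ relintFacet a l y) -> (size t)%:Z - 1 - n%:Z <= m.
Proof.
move=> [L [ls [S [ls_uniq [ls_Lam [card_B [card_S ->]]]]]]] t_uniq t_B t_int.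
have [s [s_uniq [s_int s_size]]] :=
  card_is_disjoint_union ls_uniq card_S (relintFacet_disjoint ls_Lam).
have : (size (s ++ t) <= L)%N.
  apply: (card_is_size_le card_B) => [|y]; last first.
    rewrite mem_cat => /orP [/s_int [l _ y_int] | /t_B //].
    exact: relintFacet_DeltaB y_int.
  rewrite cat_uniq s_uniq t_uniq andbT /=; apply/hasPn => y /t_int y_int.
  by apply/negP => /s_int [l _ /y_int].
by rewrite size_cat s_size -lez_nat PoszD; lra.
Qed.

Section Conditions.
Variables (n : nat) (a : 'I_n.+1 -> nat).
Hypotheses (a_gt0 : forall i, (0 < a i)%N) (n_ge2 : (2 <= n)%N).

Lemma nabla_pts_DeltaB y : y \in nabla_pts n -> DeltaB a y.
Proof.
case/mem_nabla_pts => [-> | [i ->]] l _.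
  by rewrite dotv0 oppr_le0 (le_trans _ (bval_ge1 l)).
by rewrite dotvC lerNl bval_ge.
Qed.

Lemma nabla_pts_not_relintFacet l y : y \in nabla_pts n -> ~ relintFacet a l y.
Proof.
case/mem_nabla_pts => [-> | [i ->]]; first exact: not_relintFacet0.
by rewrite -[Vcol i]scale1r; apply: not_relintFacet_scale_Vcol.
Qed.

Lemma mY_is1_of_DeltaB_pts : (forall y, DeltaB a y <-> y \in nabla_pts n) -> mY_is a 1.
Proof.
move=> DeltaB_pts.
exists n.+2, (undup [seq lambdaA a j | j <- enum 'I_n.+1]), (fun _ => 0%N).
split; first exact: undup_uniq.
split.
  move=> l; rewrite mem_undup (isLambdaP a_gt0 n_ge2).
  by split=> [/mapP [j _ ->] | [j ->]]; [exists j | rewrite map_f ?mem_enum].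
split; first by apply: card_is_nabla_pts; first lia.
split; last by rewrite big1 //; lia.
move=> l _; exists [::]; split=> //; split=> // y; split=> // y_int.
by case: (nabla_pts_not_relintFacet (proj1 (DeltaB_pts y) (relintFacet_DeltaB y_int)) y_int).
Qed.

Section ExtraPoint.
Variable y : 'rV[int]_n.
Hypotheses (y_DeltaB : DeltaB a y) (y_notin : y \notin nabla_pts n).

Lemma uniq_extra_pts : uniq (y :: nabla_pts n).
Proof. by rewrite cons_uniq y_notin uniq_nabla_pts //; lia. Qed.

Lemma extra_pts_DeltaB z : z \in y :: nabla_pts n -> DeltaB a z.
Proof. by rewrite inE => /orP [/eqP -> | /nabla_pts_DeltaB]. Qed.

Lemma size_extra_pts : size (y :: nabla_pts n) = n.+3.
Proof. by rewrite -cat1s size_cat size_nabla_pts. Qed.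

Lemma card_DeltaB_ge L : card_is (DeltaB a) L -> (n.+3 <= L)%N.
Proof.
by move/card_is_size_le/(_ uniq_extra_pts extra_pts_DeltaB); rewrite size_extra_pts.
Qed.

Lemma mY_is_ge2 m : (forall l, ~ relintFacet a l y) -> mY_is a m -> 2 <= m.
Proof.
move=> y_int /mY_is_ge /(_ uniq_extra_pts extra_pts_DeltaB); rewrite size_extra_pts.
suff /[swap]/[apply] : forall l z, z \in y :: nabla_pts n -> ~ relintFacet a l z by lia.
by move=> l z; rewrite inE => /orP [/eqP -> | /nabla_pts_not_relintFacet].
Qed.

End ExtraPoint.

Hypothesis a_mono : forall i j : 'I_n.+1, (i <= j)%N -> (a i <= a j)%N.

Local Notation a_n := (a (inord n.-1)).

Lemma inord_neq_max : inord n.-1 != ord_max :> 'I_n.+1.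
Proof. by apply/eqP => /(congr1 val) /=; rewrite inordK; lia. Qed.

Lemma DeltaB_pts_small : (a_n < 2 * a ord0)%N -> forall y, DeltaB a y <-> y \in nabla_pts n.
Proof.
move=> small y; split=> [By | /nabla_pts_DeltaB //].
apply: (bounded_pts a_gt0 (T := a_n)) => [k | | k].
- by apply: leq_trans small _; rewrite leq_mul2l a_mono.
- apply: (DeltaB_dotv_vertexA a_gt0 n_ge2 By) => i i_max; apply: a_mono.
  by rewrite inordK; have := ltn_ord i; move: i_max; rewrite -(inj_eq val_inj) /=; lia.
- by apply: (DeltaB_dotv_vertexA a_gt0 n_ge2 By) => i _; apply: a_mono; rewrite -ltnS.
Qed.

Lemma DeltaB_scale2_large : (2 * a ord0 <= a_n)%N -> DeltaB a (2%:Z *: Vcol ord0).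
Proof.
move=> large; apply: (DeltaB_scale_Vcol a_gt0 n_ge2 (c := 2) inord_neq_max) => //.
by apply: leq_trans large (a_mono _); rewrite -ltnS.
Qed.

End Conditions.

Lemma divn_eq1 m d : (0 < d)%N -> (d <= m)%N -> (m %/ d == 1)%N = (m < 2 * d)%N.
Proof.
by move=> d_gt0 d_le_m; rewrite eqn_leq -ltnS ltn_divLR // leq_divRL // mul1n d_le_m andbT.
Qed.

Unset Implicit Arguments.
Set Strict Implicit.

Theorem proposition5p6 (n : nat) (a : 'I_n.+1 -> nat) :
  (4 <= n)%N ->
  (forall i, (0 < a i)%N) ->
  (forall i j : 'I_n.+1, (i <= j)%N -> (a i <= a j)%N) ->
  \big[gcdn/0%N]_(i < n.+1) a i = 1%N ->
  (* (a) *)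
  (forall x, conv (fun z => nablaP a z /\ isLattice z) x <-> nablaFloor a x) ->
  (* (b) *)
  (exists i j : 'I_n.+1, i != j /\ dgcd a i = 1%N /\ dgcd a j = 1%N) ->
  let c1 := mY_is a 1 in
  let c2 := card_is (DeltaB a) n.+2 /\
            card_is (fun y : 'rV[int]_n => nablaV (intv y)) n.+2 in
  let c3 := forall x, conv (fun z => exists y, z = intv y /\ DeltaB a y) x <-> nablaV x in
  let c4 := (a (inord n.-1) %/ a ord0)%N = 1%N in
  [/\ c1 <-> c2, c2 <-> c3 & c3 <-> c4].
Proof.
move=> n_ge4 a_gt0 a_mono _ _ _ c1 c2 c3 c4.
have n_ge2 : (2 <= n)%N by lia.
have c4E : c4 <-> (a (inord n.-1) < 2 * a ord0)%N.
  by rewrite /c4 -divn_eq1 ?a_mono //; split=> /eqP.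
have nabla_lattice := card_nabla_lattice (ltnW n_ge2).
have [small | large] := ltnP (a (inord n.-1)) (2 * a ord0).
  have DeltaB_pts := DeltaB_pts_small a_gt0 n_ge2 a_mono small.
  have H1 : c1 := mY_is1_of_DeltaB_pts a_gt0 n_ge2 DeltaB_pts.
  have H2 : c2 := conj (card_is_nabla_pts (ltnW n_ge2) DeltaB_pts) nabla_lattice.
  have H3 : c3 := conv_lattice_nabla_pts DeltaB_pts.
  by have /c4E H4 := small; split; split.
have y2_B := DeltaB_scale2_large a_gt0 n_ge2 a_mono large.
have y2_notin : 2%:Z *: Vcol ord0 \notin nabla_pts n.
  by apply: scale2_Vcol_notin_nabla_pts; apply/eqP => /(congr1 val) /=; lia.
have y2_int l : ~ relintFacet a l (2%:Z *: Vcol ord0).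
  exact: not_relintFacet_scale_Vcol.
have N1 : ~ c1 by move/(mY_is_ge2 a_gt0 n_ge2 y2_B y2_notin y2_int).
have N2 : ~ c2 by case=> /(card_DeltaB_ge n_ge2 y2_B y2_notin); rewrite ltnn.
have N3 : ~ c3.
  move=> /(_ (intv (2%:Z *: Vcol ord0))) [+ _] => /(_ (conv1 (ex_intro _ _ (conj erefl y2_B)))).
  by move=> /nablaV_intv; apply/negP.
have N4 : ~ c4 by move/c4E; rewrite ltnNge large.
by split; split=> ?; exfalso;
  [apply: N1 | apply: N2 | apply: N2 | apply: N3 | apply: N3 | apply: N4].
Qed.
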